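(* Let $(G,R,\omega)$ be a metric RPP instance and $S$ an edge-minimizing Eulerian extension for it. Then $S$ contains no edge $\{u,v\}$ such that $u$ and $v$ belong to the same connected component of $G\langle R\rangle$ and $u$ is balanced in $G\langle R\rangle$.
   Context: An RPP instance is a triple $(G,R,\omega)$, where $G=(V,E)$ is an undirected multigraph, $\omega\colon E\to\mathbb{N}$ assigns weights (parallel edges have equal weight), and $R$ is a nonempty multiset of edges of $G$. The instance is metric if $G$ contains an edge between any two vertices and the weights satisfy the triangle inequality $\omega(\{u,w\})\le\omega(\{u,v\})+\omega(\{v,w\})$ for all $u,v,w\in V$. For a multiset $X$ of edges: - $\omega(X)$ and $|X|$ are the weight and cardinality counted with multiplicity; - $V(X)$ is the set of vertices incident to edges of $X$; - $G\langle X\rangle=(V(X),X)$ is the multigraph formed by $X$ (no isolated vertices); - $\uplus$ denotes multiset sum. A vertex is balanced in a multigraph if its degree is even (a loop counts 2), and imbalanced otherwise. A multigraph without isolated vertices is Eulerian if it is connected and all vertices are balanced. An Eulerian extension for $(G,R,\omega)$ is a multiset $S$ of edges of $G$ such that $G\langle R\uplus S\rangle$ is Eulerian. It is edge-minimizing if there is no Eulerian extension $S'$ with $|S'|<|S|$ and $\omega(S')\le\omega(S)$. *)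

From mathcomp Require Import all_boot.
Set Implicit Arguments. Unset Strict Implicit. Unset Printing Implicit Defensive.

(* A multigraph G = (V, E): a finite vertex type V, a finite edge type E,
   and each edge e has (unordered) endpoints {ep1 e, ep2 e}; loops allowed
   (ep1 e = ep2 e), parallel edges allowed (distinct e with same endpoints).
   Multisets of edges are sequences over E (multiplicity = count). *)
Section RPP.
Variables (V E : finType) (ep1 ep2 : E -> V).

Definition has_ends (e : E) (u v : V) : bool :=
  ((ep1 e == u) && (ep2 e == v)) || ((ep1 e == v) && (ep2 e == u)).

Definition mweight (w : E -> nat) (X : seq E) : nat := \sum_(e <- X) w e.

(* degree of v in G<X>; a loop counts 2 *)
Definition mdeg (X : seq E) (v : V) : nat :=
  \sum_(e <- X) ((ep1 e == v) + (ep2 e == v)).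

Definition incident (X : seq E) (v : V) : bool :=
  has (fun e => (ep1 e == v) || (ep2 e == v)) X.

Definition madj (X : seq E) : rel V := fun u v => has (fun e => has_ends e u v) X.

Definition balanced (X : seq E) (v : V) : bool := ~~ odd (mdeg X v).

Definition same_comp (X : seq E) (u v : V) : bool :=
  [&& incident X u, incident X v & connect (madj X) u v].

(* G<X> is Eulerian: connected, all vertices balanced, no isolated vertices
   (automatic, since the vertex set is V(X)) *)
Definition eulerian (X : seq E) : Prop :=
  (forall u v, incident X u -> incident X v -> connect (madj X) u v) /\
  (forall v, incident X v -> balanced X v).

Definition eulerian_ext (R S : seq E) : Prop := eulerian (R ++ S).

Definition edge_minimizing (w : E -> nat) (R S : seq E) : Prop :=
  eulerian_ext R S /\
  ~ (exists S' : seq E, eulerian_ext R S' /\ size S' < size S /\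
                        mweight w S' <= mweight w S).

Definition rpp_instance (w : E -> nat) (R : seq E) : Prop :=
  (forall e e', has_ends e' (ep1 e) (ep2 e) -> w e = w e') /\ R != [::].

Definition metric (w : E -> nat) : Prop :=
  (forall u v : V, u != v -> exists e : E, has_ends e u v) /\
  (forall (u v x : V) (e1 e2 e3 : E),
      has_ends e1 u x -> has_ends e2 u v -> has_ends e3 v x ->
      w e1 <= w e2 + w e3).

End RPP.

From Pilot Require Import Defs.
From mathcomp Require Import all_boot.
Set Implicit Arguments. Unset Strict Implicit. Unset Printing Implicit Defensive.

(* Since G<R ⊎ S> is Eulerian and u is balanced in G<R>, u has even degree in
   G<S>.  If e is a loop, deleting it changes no parity and no connectivity.
   Otherwise u has odd degree in G<S - e>, so S contains a second edge
   f = {u,x}; replace e and f by nothing (if x = v) or by an edge g = {v,x},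
   which exists and satisfies w(g) <= w(e) + w(f) in a metric instance.  In
   every case the replaced multiset is again an Eulerian extension, strictly
   smaller and not heavier, contradicting edge-minimality. *)

Section Multigraph.
Variables (V E : finType) (ep1 ep2 : E -> V).

Local Notation ends := (has_ends ep1 ep2).
Local Notation mdeg := (mdeg ep1 ep2).
Local Notation incident := (incident ep1 ep2).
Local Notation madj := (madj ep1 ep2).

Lemma has_endsC e a b : ends e a b = ends e b a.
Proof. by rewrite /has_ends orbC. Qed.

Lemma deg_ends e a b y : ends e a b ->
  (ep1 e == y) + (ep2 e == y) = (a == y) + (b == y).
Proof. by case/orP=> /andP[/eqP-> /eqP->] //; rewrite addnC. Qed.

Lemma inc_ends e a b y : ends e a b ->
  (ep1 e == y) || (ep2 e == y) = (a == y) || (b == y).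
Proof. by case/orP=> /andP[/eqP-> /eqP->] //; rewrite orbC. Qed.

Lemma mdeg_nil y : mdeg [::] y = 0.
Proof. exact: big_nil. Qed.

Lemma mdeg_cons e X y :
  mdeg (e :: X) y = (ep1 e == y) + (ep2 e == y) + mdeg X y.
Proof. by rewrite /Defs.mdeg big_cons. Qed.

Lemma mdeg_cat X Y y : mdeg (X ++ Y) y = mdeg X y + mdeg Y y.
Proof. by rewrite /Defs.mdeg big_cat. Qed.

Lemma mdeg_perm X Y : perm_eq X Y -> mdeg X =1 mdeg Y.
Proof. by move=> pXY y; rewrite /Defs.mdeg (perm_big _ pXY). Qed.

Lemma incident_cat X Y y : incident (X ++ Y) y = incident X y || incident Y y.
Proof. exact: has_cat. Qed.

Lemma madj_cons e X a b : madj (e :: X) a b = ends e a b || madj X a b.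
Proof. by []. Qed.

Lemma madj_cat X Y a b : madj (X ++ Y) a b = madj X a b || madj Y a b.
Proof. exact: has_cat. Qed.

Lemma madj_sym X : symmetric (madj X).
Proof. by move=> a b; apply: eq_has => e; exact: has_endsC. Qed.

(* Adjacency, hence connectivity, only depends on the multiset of edges. *)
Lemma eulerian_perm X Y : perm_eq X Y ->
  eulerian ep1 ep2 X -> eulerian ep1 ep2 Y.
Proof.
move=> pXY [conn bal].
have incE y : incident Y y = incident X y by rewrite /Defs.incident (perm_has _ pXY).
have adjE : madj Y =2 madj X by move=> a b; rewrite /Defs.madj (perm_has _ pXY).
split=> [a b | y]; rewrite !incE.
  by move=> ia ib; rewrite (eq_connect adjE); exact: conn.
by move=> iy; rewrite /balanced -(mdeg_perm pXY); exact: bal.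
Qed.

Lemma connect_ends Y e a b c d : ends e c d -> ends e a b ->
  connect (madj Y) c d -> connect (madj Y) a b.
Proof.
have symY := sym_connect_sym (madj_sym Y).
case/orP=> /andP[/eqP<- /eqP<-] /orP[]/andP[/eqP-> /eqP->] //;
  by rewrite symY.
Qed.

Lemma odd_mdeg_edge X u : odd (mdeg X u) ->
  exists2 f, f \in X & exists x, ends f u x.
Proof.
elim: X => [|g X IH]; first by rewrite mdeg_nil.
rewrite mdeg_cons oddD; case: (boolP (odd _)) => [odd_g _ | _ /IH[f fX hf]].
  exists g; first exact: mem_head.
  move: odd_g; rewrite /has_ends.
  by case: (ep1 g =P u); case: (ep2 g =P u) => //= _ _ _;
    [exists (ep2 g) | exists (ep1 g)]; rewrite eqxx.
by exists f; rewrite // in_cons fX orbT.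
Qed.

Lemma ext_balanced R S u : eulerian_ext ep1 ep2 R S ->
  incident R u -> balanced ep1 ep2 R u -> ~~ odd (mdeg S u).
Proof.
case=> _ bal iu; rewrite /balanced => /negbTE evenR.
by have := bal u; rewrite incident_cat iu /balanced mdeg_cat oddD evenR; apply.
Qed.

(* B may replace the part A of the extension A ⊎ T: same degree parities, no
   new vertices, and the ends of every edge of A stay connected. *)
Definition replaceable (R A B T : seq E) : Prop :=
  [/\ forall y, odd (mdeg B y) = odd (mdeg A y),
      forall y, incident B y -> incident A y &
      forall a b, madj A a b -> connect (madj (R ++ B ++ T)) a b].

(* The replacement lemma: parities give balance, inclusion of vertices keeps
   every vertex of G<R ⊎ B ⊎ T> in G<R ⊎ A ⊎ T>, and every edge of
   G<R ⊎ A ⊎ T> is simulated by a path of G<R ⊎ B ⊎ T>. *)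
Lemma replace_ext R A B T : replaceable R A B T ->
  eulerian_ext ep1 ep2 R (A ++ T) -> eulerian_ext ep1 ep2 R (B ++ T).
Proof.
case=> par inc adj [conn bal].
have incE y : incident (R ++ B ++ T) y -> incident (R ++ A ++ T) y.
  by rewrite !incident_cat => /or3P[-> | /inc-> | ->]; rewrite ?orbT.
have adjE a b : madj (R ++ A ++ T) a b -> connect (madj (R ++ B ++ T)) a b.
  rewrite !madj_cat => /or3P[adjR | /adj // | adjT];
    by apply: connect1; rewrite !madj_cat ?adjR ?adjT ?orbT.
split=> [a b /incE ia /incE ib | y /incE iy].
  exact: connect_sub adjE a b (conn a b ia ib).
by have := bal y iy; rewrite /balanced !mdeg_cat !oddD par.
Qed.

Lemma loop_replaceable R T e u : ends e u u -> replaceable R [:: e] [::] T.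
Proof.
move=> he; split=> [y|y //|a b].
  by rewrite mdeg_cons (deg_ends _ he) mdeg_nil addn0 addnn odd_double.
by rewrite madj_cons orbF => hab; apply: connect_ends he hab (connect0 _ u).
Qed.

Lemma pair_replaceable R B T e f u v x :
  ends e u v -> ends f u x -> connect (madj R) u v ->
  (forall y, odd (mdeg B y) = odd ((v == y) + (x == y))) ->
  (forall y, incident B y -> (y == v) || (y == x)) ->
  connect (madj (R ++ B ++ T)) v x ->
  replaceable R [:: e; f] B T.
Proof.
move=> he hf cR parB incB cvx.
have cuv : connect (madj (R ++ B ++ T)) u v.
  by apply: connect_sub cR => a b adj; apply: connect1; rewrite madj_cat adj.
split=> [y|y /incB|a b].
- rewrite parB !mdeg_cons (deg_ends _ he) (deg_ends _ hf) mdeg_nil.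
  by rewrite addn0 addnACA [in RHS]oddD addnn odd_double.
- rewrite /Defs.incident /= (inc_ends _ he) (inc_ends _ hf).
  by case/orP=> /eqP->; rewrite eqxx ?orbT.
- rewrite !madj_cons orbF => /orP[hab | hab].
    exact: connect_ends he hab cuv.
  exact: connect_ends hf hab (connect_trans cuv cvx).
Qed.

Lemma no_cheaper_replacement w R S A B T :
  edge_minimizing ep1 ep2 w R S -> perm_eq S (A ++ T) ->
  size B < size A -> mweight w B <= mweight w A ->
  replaceable R A B T -> False.
Proof.
move=> [ext nomin] pS ltBA leBA rep; apply: nomin; exists (B ++ T); split; [|split].
- apply: replace_ext rep _; apply: eulerian_perm ext.
  by rewrite perm_cat2l.
- by rewrite (perm_size pS) !size_cat ltn_add2r.
- by rewrite /mweight (perm_big _ pS) !big_cat leq_add2r.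
Qed.

End Multigraph.

Theorem mainTheorem5 (V E : finType) (ep1 ep2 : E -> V) (w : E -> nat)
    (R S : seq E) :
  rpp_instance ep1 ep2 w R ->
  metric ep1 ep2 w ->
  edge_minimizing ep1 ep2 w R S ->
  forall (e : E) (u v : V),
    e \in S -> has_ends ep1 ep2 e u v ->
    same_comp ep1 ep2 R u v -> balanced ep1 ep2 R u -> False.
Proof.
move=> _ [edge_exists triangle] min e u v eS he /and3P[iu _ cuv] bu.
have evenS := ext_balanced min.1 iu bu.
have pS1 : perm_eq S ([:: e] ++ rem e S) := perm_to_rem eS.
case: (eqVneq u v) => [eq_uv | neq_uv].
  subst v; apply: (no_cheaper_replacement (B := [::]) min pS1) => //.
    by rewrite /mweight big_nil.
  exact: loop_replaceable he.
(* Otherwise u has odd degree in S - e, hence a second edge f = {u,x}. *)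
have : odd (mdeg ep1 ep2 (rem e S) u).
  move: evenS; rewrite (mdeg_perm _ _ pS1) mdeg_cons (deg_ends _ he).
  by rewrite eqxx eq_sym (negbTE neq_uv) oddD negbK.
case/odd_mdeg_edge => f fS [x hf].
have pS : perm_eq S ([:: e; f] ++ rem f (rem e S)).
  by apply: perm_trans pS1 _; rewrite /= perm_cons perm_to_rem.
case: (eqVneq v x) => [eq_vx | neq_vx].
  subst x.
  apply: (no_cheaper_replacement (B := [::]) min pS) => //.
    by rewrite /mweight big_nil.
  apply: (pair_replaceable he hf cuv) => [y|//|]; last exact: connect0.
  by rewrite mdeg_nil addnn odd_double.
(* x <> v: replace e and f by the metric shortcut g = {v,x}. *)
have [g hg] := edge_exists v x neq_vx.
apply: (no_cheaper_replacement (B := [:: g]) min pS) => //.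
  rewrite /mweight !big_cons !big_nil !addn0.
  by apply: triangle hg _ hf; rewrite has_endsC.
apply: (pair_replaceable he hf cuv) => [y|y|].
- by rewrite mdeg_cons (deg_ends _ hg) mdeg_nil addn0.
- by rewrite /Defs.incident /= orbF (inc_ends _ hg) ![_ == y]eq_sym.
- by apply: connect1; rewrite !madj_cat madj_cons hg orbT.
Qed.
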